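(* Let $n\ge2$ and let $\varphi$ be a skew morphism of $\mathbb{Z}_n$ with odd complexity and auto-order $m$. Then $\varphi$ is uniquely determined by the triple $(\varphi(1),\varphi',\varphi^m)$: if $\psi$ is any skew morphism of $\mathbb{Z}_n$ with odd complexity such that $\psi(1)=\varphi(1)$, $\psi'=\varphi'$ and $\psi^m=\varphi^m$, then $\psi=\varphi$.
   Context: $\mathbb{Z}_n$ is the cyclic group of integers modulo $n$. A skew morphism of a finite group $G$ is a permutation $\varphi$ of $G$ fixing the identity such that for each $a\in G$ there is a non-negative integer $i_a$ with $\varphi(ab)=\varphi(a)\varphi^{i_a}(b)$ for all $b\in G$. ${\rm ord}(\varphi)$ is the order of $\langle\varphi\rangle$. If $\varphi$ is non-trivial, $\pi_\varphi(a)$ is the unique such $i_a\in\{1,\dots,{\rm ord}(\varphi)-1\}$; if $\varphi$ is the identity, $\pi_\varphi(a)=1$. Let $\sigma_\varphi(x,y)=\sum_{i=0}^{x-1}\pi_\varphi(\varphi^i(y))\in\mathbb{Z}_{{\rm ord}(\varphi)}$. The derived skew morphism $\varphi'$ of a skew morphism $\varphi$ of $\mathbb{Z}_n$ is the skew morphism of $\mathbb{Z}_{{\rm ord}(\varphi)}$ given by $\varphi'(a)=\sigma_\varphi(a,1)$. Set $\varphi^{(0)}=\varphi$, $\varphi^{(i+1)}=(\varphi^{(i)})'$. For $n\ge 2$ the complexity of $\varphi$ is the unique non-negative integer $c$ such that $\varphi^{(c)}$ is a skew morphism of a non-trivial cyclic group $\mathbb{Z}_m$ and $\varphi^{(c+1)}$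 is a skew morphism of $\mathbb{Z}_1$; $m$ is the auto-order of $\varphi$. *)

(* Z_n is modelled as {0,...,n-1} inside nat, with addition mod n;
   a map of Z_n is a function nat -> nat, only its values on [0,n) matter. *)
From mathcomp Require Import all_boot.
Set Implicit Arguments. Unset Strict Implicit. Unset Printing Implicit Defensive.

Definition is_skew_morphism (n : nat) (f : nat -> nat) : Prop :=
  [/\ forall x, x < n -> f x < n,
      {in [pred x | x < n] &, injective f},
      f 0 = 0 &
      forall a, a < n -> exists i : nat,
        forall b, b < n -> f ((a + b) %% n) = (f a + iter i f b) %% n].

(* ord(phi): the least k >= 1 with phi^k = id on Z_n.  For a permutation of an
   n-element set this k divides n!, so the bounded search is exact. *)
Definition sk_ord (n : nat) (f : nat -> nat) : nat :=
  head 0 [seq k <- iota 1 (n`!) | [forall x : 'I_n, iter k f x == x]].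

(* power function pi_phi(a): the unique i in {1..ord-1} (least one taken),
   or 1 if phi is the identity (ord = 1). *)
Definition sk_pi (n : nat) (f : nat -> nat) (a : nat) : nat :=
  if sk_ord n f == 1 then 1 else
  head 0 [seq i <- iota 1 (sk_ord n f).-1 |
          [forall b : 'I_n, f ((a + b) %% n) == (f a + iter i f b) %% n]].

Definition sk_sigma (n : nat) (f : nat -> nat) (x y : nat) : nat :=
  (\sum_(i < x) sk_pi n f (iter i f y)) %% sk_ord n f.

Definition sk_derived (n : nat) (f : nat -> nat) : nat -> nat :=
  fun a => sk_sigma n f a (1 %% n).

(* k-th derived: pair (phi^(k), modulus of its cyclic group) *)
Fixpoint sk_chain (k : nat) (n : nat) (f : nat -> nat) : (nat -> nat) * nat :=
  match k with
  | 0 => (f, n)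
  | k'.+1 => let p := sk_chain k' n f in (sk_derived p.2 p.1, sk_ord p.2 p.1)
  end.

Definition sk_complexity (n : nat) (f : nat -> nat) (c : nat) : Prop :=
  2 <= (sk_chain c n f).2 /\ (sk_chain c.+1 n f).2 = 1.

Definition sk_auto_order (n : nat) (f : nat -> nat) (c : nat) : nat :=
  (sk_chain c n f).2.

(* Let r = ord phi.  The power function is read off the derived skew
   morphism, pi(a) = phi'^a(1) (mod r), and the second derived one retraces
   the orbit of 1: phi''^k(1) = phi^k(1) (mod ord phi').  Hence the property
   "m divides the modulus and the orbit of 1 stays congruent to 1 mod m"
   descends from phi^(i+2) to phi^(i).  It holds for phi^(c), the identity of
   Z_m, so for odd c it holds for phi', i.e. pi(a) = 1 (mod m) for all a.
   Since pi is determined by phi', psi has the same power function, and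
   psi^(pi a)(1) = psi^(qm)(psi 1) = phi^(pi a)(1).  Now the identity
   phi(a + 1) = phi(a) + phi^(pi a)(1) determines psi = phi step by step. *)

From mathcomp Require Import all_boot fingroup perm cyclic.
From mathcomp Require Import zify.
Set Implicit Arguments. Unset Strict Implicit. Unset Printing Implicit Defensive.

Lemma head_filter_iota (P : pred nat) a l k :
  a <= k < a + l -> P k ->
  let h := head 0 [seq i <- iota a l | P i] in [/\ a <= h, h <= k & P h].
Proof.
elim: l a => [|l IH] a /= /andP[ak kal] Pk; first by lia.
case Pa: (P a) => /=; first by [].
have ak' : a < k by rewrite ltn_neqAle ak andbT; apply: contraFneq Pa => ->.
have [] := IH a.+1 ltac:(lia) Pk; split=> //; lia.
Qed.

Section SkewMorphism.
Variables (N : nat) (f : nat -> nat).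
Hypotheses (N_gt0 : 0 < N) (f_skew : is_skew_morphism N f).
Local Notation R := (sk_ord N f).

Lemma skew_lt x : x < N -> f x < N.
Proof. by case: f_skew => + _ _ _; apply. Qed.

Lemma iter_skew_lt k x : x < N -> iter k f x < N.
Proof. by move=> xN; elim: k => //= k; apply: skew_lt. Qed.

Lemma skew_inj x y : x < N -> y < N -> f x = f y -> x = y.
Proof. by case: f_skew => _ + _ _; apply. Qed.

Lemma iter_skew_inj k x y : x < N -> y < N -> iter k f x = iter k f y -> x = y.
Proof.
move=> xN yN; elim: k => //= k IH /skew_inj E.
by apply/IH/E; apply: iter_skew_lt.
Qed.

Lemma skew0 : f 0 = 0.
Proof. by case: f_skew. Qed.

Lemma iter_skew0 k : iter k f 0 = 0.
Proof. by elim: k => //= k ->; rewrite skew0. Qed.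

Lemma iter_skew_fact x : x < N -> iter N`! f x = x.
Proof.
pose g (x : 'I_N) : 'I_N := Ordinal (skew_lt (ltn_ord x)).
have g_inj : injective g.
  by move=> x1 x2 /(congr1 val) /skew_inj E; apply/val_inj/E.
pose p := perm g_inj.
have pN : (p ^+ N`!)%g = 1%g.
  by have := expg_cardG (in_setT p); rewrite cardsT card_Sn.
have iter_p k (y : 'I_N) : val (iter k p y) = iter k f (val y).
  by elim: k => //= k IH; rewrite permE /= IH.
by move=> xN; rewrite -[x]/(val (Ordinal xN)) -iter_p -permX pN perm1.
Qed.

Lemma iter_idP k :
  reflect (forall x, x < N -> iter k f x = x) [forall x : 'I_N, iter k f x == x].
Proof.
apply: (iffP forallP) => [H x xN | H x]; first exact: eqP (H (Ordinal xN)).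
exact/eqP/H.
Qed.

Lemma sk_ord_spec : [/\ 0 < R, forall x, x < N -> iter R f x = x &
  forall k, 0 < k -> (forall x, x < N -> iter k f x = x) -> R <= k].
Proof.
have fact_gt0 := fact_gt0 N.
have first_id k := @head_filter_iota
  (fun k => [forall x : 'I_N, iter k f x == x]) 1 N`! k.
have [R_gt0 R_le /iter_idP R_id] :=
  first_id N`! ltac:(lia) (introT (iter_idP _) iter_skew_fact).
split=> // k k_gt0 k_id.
have [kN|/ltnW kN] := leqP k N`!; last exact: leq_trans R_le kN.
by have [] := first_id k ltac:(lia) (introT (iter_idP _) k_id).
Qed.

Lemma sk_ord_gt0 : 0 < R.
Proof. by case: sk_ord_spec. Qed.

Lemma iter_sk_ord x : x < N -> iter R f x = x.
Proof. by case: sk_ord_spec => _ + _; apply. Qed.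

Lemma iter_mod_sk_ord k x : x < N -> iter k f x = iter (k %% R) f x.
Proof.
move=> xN; rewrite {1}(divn_eq k R) iterD.
by elim: (k %/ R) => //= q IH; rewrite mulSn iterD IH iter_sk_ord // iter_skew_lt.
Qed.

Lemma sk_ord_dvd k : (forall x, x < N -> iter k f x = x) -> R %| k.
Proof.
move=> k_id; apply: contraT; rewrite /dvdn -lt0n => kR_gt0.
have kR_id x : x < N -> iter (k %% R) f x = x.
  by move=> xN; rewrite -iter_mod_sk_ord ?k_id.
have [_ _ /(_ _ kR_gt0 kR_id)] := sk_ord_spec.
by rewrite leqNgt ltn_pmod // sk_ord_gt0.
Qed.

Lemma eq_iter_mod i j :
  (forall x, x < N -> iter i f x = iter j f x) -> i = j %[mod R].
Proof.
wlog ij : i j / i <= j => [W E|E].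
  case: (leqP i j) => [ij|/ltnW ji]; first exact: W.
  by rewrite (W j i ji) // => x xN; rewrite E.
apply/eqP; rewrite eq_sym eqn_mod_dvd //; apply: sk_ord_dvd => x xN.
apply: (@iter_skew_inj i); rewrite ?iter_skew_lt //.
by rewrite -iterD subnKC // E.
Qed.

Lemma sk_ord_eq1P : R = 1 <-> forall x, x < N -> f x = x.
Proof.
split=> [R1 x /iter_sk_ord|f_id]; first by rewrite R1.
by have [R_gt0 _ /(_ 1 isT f_id)] := sk_ord_spec; lia.
Qed.

Lemma skew_shift_id a : a < N ->
    (forall b, b < N -> f ((a + b) %% N) = (f a + b) %% N) ->
  forall x, x < N -> f x = x.
Proof.
move=> aN f_shift.
have fa : f a = a.
  case: (posnP a) => [->|a_gt0]; first exact: skew0.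
  have := f_shift (N - a) ltac:(lia).
  have := skew_lt aN; rewrite subnKC ?(ltnW aN) // modnn skew0 => faN.
  case: (ltnP (f a + (N - a)) N) => h; first by rewrite modn_small //; lia.
  by rewrite -(subnK h) modnDr modn_small; lia.
move=> x xN; case: (leqP a x) => [ax|xa].
  by have := f_shift (x - a) ltac:(lia); rewrite fa subnKC // !modn_small.
have := f_shift (x + N - a) ltac:(lia); rewrite fa.
have -> : a + (x + N - a) = x + N by lia.
by rewrite modnDr modn_small.
Qed.

Lemma sk_pi_nontrivial a : R != 1 -> a < N ->
  0 < sk_pi N f a < R /\
  forall b, b < N -> f ((a + b) %% N) = (f a + iter (sk_pi N f a) f b) %% N.
Proof.
move=> R_neq1 aN.
have [i i_skew] : exists i,
    forall b, b < N -> f ((a + b) %% N) = (f a + iter i f b) %% N.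
  by case: f_skew => _ _ _; apply.
have iR_skew b : b < N -> f ((a + b) %% N) = (f a + iter (i %% R) f b) %% N.
  by move=> bN; rewrite i_skew // iter_mod_sk_ord.
have iR_gt0 : 0 < i %% R.
  rewrite lt0n; apply: contra R_neq1 => /eqP iR0; apply/eqP/sk_ord_eq1P.
  by apply: (skew_shift_id aN) => b bN; rewrite iR_skew // iR0.
have iR_lt : i %% R < R by rewrite ltn_pmod // sk_ord_gt0.
have [pi_gt0 pi_le /forallP pi_skew] := @head_filter_iota
  (fun i => [forall b : 'I_N, f ((a + b) %% N) == (f a + iter i f b) %% N])
  1 R.-1 (i %% R) ltac:(lia)
  (introT forallP (fun b => introT eqP (iR_skew _ (ltn_ord b)))).
rewrite /sk_pi (negbTE R_neq1); split; first lia.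
by move=> b bN; apply/eqP/(pi_skew (Ordinal bN)).
Qed.

Lemma skew_pi a : a < N -> forall b, b < N ->
  f ((a + b) %% N) = (f a + iter (sk_pi N f a) f b) %% N.
Proof.
move=> aN; have [R1|R_neq1] := eqVneq R 1; last by case: (sk_pi_nontrivial R_neq1 aN).
by move: (R1) => /sk_ord_eq1P f_id b bN; rewrite /sk_pi R1 /= !f_id // ltn_pmod.
Qed.

Lemma sk_pi0 : sk_pi N f 0 = 1.
Proof.
rewrite /sk_pi; case: eqP => // R_neq1.
have R_gt1 : 1 < R by have := sk_ord_gt0; lia.
have -> /= : R.-1 = R.-2.+1 by lia.
suff -> : [forall b : 'I_N, f ((0 + b) %% N) == (f 0 + iter 1 f b) %% N] by [].
by apply/forallP => b; rewrite skew0 !add0n !modn_small ?skew_lt.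
Qed.
End SkewMorphism.

Section DerivedSkewMorphism.
Variables (N : nat) (f : nat -> nat).
Hypotheses (N_gt0 : 0 < N) (f_skew : is_skew_morphism N f).
Local Notation R := (sk_ord N f).
Local Notation d := (sk_derived N f).
Let R_gt0 : 0 < R := sk_ord_gt0 N_gt0 f_skew.

Definition pi_sum k a := \sum_(i < k) sk_pi N f (iter i f a).

Lemma iter_skew_add k a b : a < N -> b < N ->
  iter k f ((a + b) %% N) = (iter k f a + iter (pi_sum k a) f b) %% N.
Proof.
move=> aN bN; elim: k => [|k IH]; first by rewrite /pi_sum big_ord0.
rewrite iterS IH /pi_sum big_ord_recr /= skew_pi ?iter_skew_lt //.
by rewrite -iterD -/(pi_sum k a) [_ + pi_sum k a]addnC.
Qed.

Lemma pi_sumD k l a : pi_sum (k + l) a = pi_sum k a + pi_sum l (iter k f a).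
Proof.
rewrite /pi_sum big_split_ord /=; congr (_ + _).
by apply: eq_bigr => i _; rewrite addnC iterD.
Qed.

Lemma pi_sum0 k : pi_sum k 0 = k.
Proof.
elim: k => [|k IH]; first by rewrite /pi_sum big_ord0.
rewrite /pi_sum big_ord_recr /= -/(pi_sum k 0) IH.
by rewrite (iter_skew0 f_skew) sk_pi0 // addn1.
Qed.

Lemma pi_sum_sk_ord a : a < N -> pi_sum R a = 0 %[mod R].
Proof.
move=> aN; apply: eq_iter_mod => // b bN /=.
have := iter_skew_add R aN bN; rewrite !iter_sk_ord ?ltn_pmod //.
move/eqP; rewrite eqn_modDl => /eqP.
by rewrite !modn_small ?iter_skew_lt.
Qed.

Lemma pi_sum_mod k a : a < N -> pi_sum k a = pi_sum (k %% R) a %[mod R].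
Proof.
move=> aN; rewrite {1}(divn_eq k R); elim: (k %/ R) => //= q IH.
rewrite mulSn -addnA pi_sumD iter_sk_ord // -modnDml pi_sum_sk_ord //.
by rewrite mod0n add0n.
Qed.

Lemma pi_sum_congr k l a : a < N -> k = l %[mod R] -> pi_sum k a = pi_sum l a %[mod R].
Proof. by move=> aN kl; rewrite pi_sum_mod // kl -pi_sum_mod. Qed.

(* Both sides are exponents computing f^k(a + b + c), once bracketed as
   (a + b) + c and once as a + (b + c). *)
Lemma pi_sum_comp k a b : a < N -> b < N ->
  pi_sum (pi_sum k a) b = pi_sum k ((a + b) %% N) %[mod R].
Proof.
move=> aN bN; apply: eq_iter_mod => // c cN.
have abN : (a + b) %% N < N by apply: ltn_pmod.
have bcN : (b + c) %% N < N by apply: ltn_pmod.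
have assoc : ((a + b) %% N + c) %% N = (a + (b + c) %% N) %% N.
  by rewrite modnDml modnDmr addnA.
have E1 := iter_skew_add k abN cN; have E2 := iter_skew_add k aN bcN.
have E3 := iter_skew_add (pi_sum k a) bN cN; have E4 := iter_skew_add k aN bN.
set A := iter k f a in E2 E4; set B := iter (pi_sum k a) f b in E3 E4.
set Y := iter (pi_sum k ((a + b) %% N)) f c in E1.
set Z := iter (pi_sum (pi_sum k a) b) f c in E3.
have : (A + B + Y) %% N = (A + B + Z) %% N.
  by rewrite -modnDml -E4 -E1 assoc E2 E3 modnDmr addnA.
move/eqP; rewrite -!addnA !eqn_modDl => /eqP.
by rewrite /Y /Z !(modn_small (iter_skew_lt f_skew _ cN)) => ->.
Qed.

Lemma sk_derivedE k : d k = pi_sum k (1 %% N) %% R.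
Proof. by []. Qed.

Lemma sk_derived_lt k : d k < R.
Proof. exact: ltn_pmod. Qed.

Lemma iter_sk_derived_lt j k : k < R -> iter j d k < R.
Proof. by case: j => // j _; apply: sk_derived_lt. Qed.

Lemma iter_sk_derived j k : iter j d k = pi_sum k (j %% N) %[mod R].
Proof.
elim: j => [|j IH]; first by rewrite /= mod0n pi_sum0.
have oneN : 1 %% N < N by apply: ltn_pmod.
rewrite iterS sk_derivedE modn_mod (pi_sum_congr _ IH) //.
by rewrite pi_sum_comp ?ltn_pmod // modnDm addn1.
Qed.

Lemma iter_sk_derived_N k : k < R -> iter N d k = k.
Proof.
move=> kR; have := iter_sk_derived N k.
by rewrite modnn pi_sum0 !modn_small ?iter_sk_derived_lt.
Qed.

Lemma sk_pi_iter_derived a : a < N -> sk_pi N f a = iter a d (1 %% R) %[mod R].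
Proof.
move=> aN; rewrite iter_sk_derived (modn_small aN).
by rewrite (@pi_sum_congr (1 %% R) 1) ?modn_mod // /pi_sum big_ord1.
Qed.

Lemma sk_derived_skewE k l : l < R ->
  d ((k + l) %% R) = (d k + iter (iter k f (1 %% N)) d l) %% R.
Proof.
move=> lR; have oneN : 1 %% N < N by apply: ltn_pmod.
rewrite !sk_derivedE (@pi_sum_congr ((k + l) %% R) (k + l)) ?modn_mod //.
rewrite pi_sumD modnDml -[in RHS]modnDmr iter_sk_derived modnDmr.
by rewrite (modn_small (iter_skew_lt f_skew k oneN)).
Qed.

Lemma sk_derived_skew : is_skew_morphism R d.
Proof.
split=> [x _|x y xR yR dxy||a aR]; first exact: sk_derived_lt.
- (* d is injective on Z_R because d^N is the identity there. *)
  have iterN z : iter N d z = iter N.-1 d (d z) by rewrite -iterSr prednK.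
  by rewrite -(iter_sk_derived_N xR) -(iter_sk_derived_N yR) !iterN dxy.
- by rewrite sk_derivedE /pi_sum big_ord0 mod0n.
- by exists (iter a f (1 %% N)) => l lR; apply: sk_derived_skewE.
Qed.

Lemma sk_pi_derived k : k < R -> sk_pi R d k = iter k f (1 %% N) %[mod sk_ord R d].
Proof.
move=> kR; apply: (eq_iter_mod R_gt0 sk_derived_skew) => l lR.
have := skew_pi R_gt0 sk_derived_skew kR lR.
rewrite sk_derived_skewE // => /eqP; rewrite eq_sym eqn_modDl => /eqP.
by rewrite !(modn_small (iter_sk_derived_lt _ lR)).
Qed.

Lemma sk_ord_derived_dvd : sk_ord R d %| N.
Proof. exact: (sk_ord_dvd R_gt0 sk_derived_skew iter_sk_derived_N). Qed.
End DerivedSkewMorphism.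

Lemma iter_chain2_one N f k : 0 < N -> is_skew_morphism N f -> k < sk_ord N f ->
  iter k (sk_chain 2 N f).1 (1 %% (sk_chain 2 N f).2)
    = iter k f (1 %% N) %[mod (sk_chain 2 N f).2].
Proof.
move=> N_gt0 f_skew kR; have R_gt0 := sk_ord_gt0 N_gt0 f_skew.
rewrite -(sk_pi_iter_derived R_gt0 (sk_derived_skew N_gt0 f_skew) kR).
exact: sk_pi_derived.
Qed.

Definition orbit_one_mod (m : nat) (p : (nat -> nat) * nat) : Prop :=
  m %| p.2 /\ forall k, iter k p.1 (1 %% p.2) = 1 %[mod m].

Section DerivedChain.
Variables (N : nat) (f : nat -> nat).
Hypotheses (N_gt0 : 0 < N) (f_skew : is_skew_morphism N f).

Lemma sk_chain_skew i :
  0 < (sk_chain i N f).2 /\ is_skew_morphism (sk_chain i N f).2 (sk_chain i N f).1.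
Proof.
elim: i => [|i [M_gt0 g_skew]] //.
by split; [apply: sk_ord_gt0 | apply: sk_derived_skew].
Qed.

Lemma orbit_one_mod_chainSS m i :
  orbit_one_mod m (sk_chain i.+2 N f) -> orbit_one_mod m (sk_chain i N f).
Proof.
have [M_gt0 g_skew] := sk_chain_skew i.
have R_gt0 := sk_ord_gt0 M_gt0 g_skew.
case=> [m_dvd orbit]; split; first exact: dvdn_trans m_dvd (sk_ord_derived_dvd _ _).
move=> k; rewrite (iter_mod_sk_ord M_gt0 g_skew) ?ltn_pmod //.
have := iter_chain2_one M_gt0 g_skew (ltn_pmod k R_gt0).
by rewrite -(modn_dvdm _ m_dvd) => <-; rewrite (modn_dvdm _ m_dvd) orbit.
Qed.

Lemma orbit_one_mod_chain_even m i j :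
  orbit_one_mod m (sk_chain (i + j.*2) N f) -> orbit_one_mod m (sk_chain i N f).
Proof.
elim: j => [|j IH]; first by rewrite addn0.
by rewrite doubleS !addnS => /orbit_one_mod_chainSS.
Qed.

Lemma orbit_one_mod_auto_order c :
  sk_complexity N f c -> orbit_one_mod (sk_auto_order N f c) (sk_chain c N f).
Proof.
case=> _ ord1; split=> // k.
have [M_gt0 g_skew] := sk_chain_skew c.
have /(sk_ord_eq1P M_gt0 g_skew) g_id := ord1.
by rewrite iter_fix ?g_id ?ltn_pmod // modn_mod.
Qed.

Lemma sk_pi_mod_auto_order c : sk_complexity N f c -> odd c ->
  forall a, a < N -> sk_pi N f a %% sk_auto_order N f c = 1.
Proof.
move=> f_c c_odd a aN; set m := sk_auto_order N f c.
have m_gt1 : 1 < m by case: f_c.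
have c_eq : c = 1 + c./2.*2 by rewrite -[in LHS](odd_double_half c) c_odd.
have := orbit_one_mod_auto_order f_c; rewrite -/m c_eq.
move=> /orbit_one_mod_chain_even [/= m_dvd orbit].
rewrite -(modn_dvdm _ m_dvd) (sk_pi_iter_derived N_gt0 f_skew aN).
by rewrite (modn_dvdm _ m_dvd) orbit modn_small.
Qed.
End DerivedChain.

Lemma sk_pi_eq_of_derived N phi psi :
  0 < N -> is_skew_morphism N phi -> is_skew_morphism N psi ->
  sk_ord N psi = sk_ord N phi ->
  (forall a, a < sk_ord N phi -> sk_derived N psi a = sk_derived N phi a) ->
  forall a, a < N -> sk_pi N psi a = sk_pi N phi a.
Proof.
move=> N_gt0 phi_skew psi_skew ord_eq der_eq a aN.
have [R1|R_neq1] := eqVneq (sk_ord N phi) 1; first by rewrite /sk_pi ord_eq R1.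
have iter_der_eq j y : y < sk_ord N phi ->
    iter j (sk_derived N psi) y = iter j (sk_derived N phi) y.
  by move=> yR; elim: j => //= j ->; apply/der_eq/iter_sk_derived_lt.
have [pi_phi_lt _] := sk_pi_nontrivial N_gt0 phi_skew R_neq1 aN.
have psi_R_neq1 : sk_ord N psi != 1 by rewrite ord_eq.
have [pi_psi_lt _] := sk_pi_nontrivial N_gt0 psi_skew psi_R_neq1 aN.
rewrite ord_eq in pi_psi_lt.
have := sk_pi_iter_derived N_gt0 psi_skew aN.
rewrite ord_eq iter_der_eq; last exact: ltn_pmod _ (sk_ord_gt0 N_gt0 phi_skew).
rewrite -(sk_pi_iter_derived N_gt0 phi_skew aN).
by rewrite !modn_small //; lia.
Qed.

Lemma iter_eq_of_modn_eq1 N phi psi m p x :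
  (forall y, y < N -> phi y < N) ->
  (forall y, y < N -> iter m psi y = iter m phi y) ->
  x < N -> psi x = phi x -> p %% m = 1 -> iter p psi x = iter p phi x.
Proof.
move=> phi_lt period_eq xN x_eq pm1.
have iter_phi_lt k y : y < N -> iter k phi y < N.
  by move=> yN; elim: k => //= k; apply: phi_lt.
rewrite (divn_eq p m) pm1 addn1 !iterSr x_eq.
elim: (p %/ m) => //= q IH.
by rewrite mulSn !iterD IH period_eq ?iter_phi_lt ?phi_lt.
Qed.

Lemma skew_eq_of_pi N phi psi :
  1 < N -> is_skew_morphism N phi -> is_skew_morphism N psi ->
  (forall a, a < N -> sk_pi N psi a = sk_pi N phi a) ->
  (forall a, a < N -> iter (sk_pi N phi a) psi 1 = iter (sk_pi N phi a) phi 1) ->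
  forall x, x < N -> psi x = phi x.
Proof.
move=> N_gt1 phi_skew psi_skew pi_eq orbit_eq.
have N_gt0 : 0 < N by apply: ltnW.
elim=> [|x IH] x1N; first by rewrite (skew0 phi_skew) (skew0 psi_skew).
have xN : x < N by apply: ltnW.
rewrite -(modn_small x1N) -addn1.
rewrite (skew_pi N_gt0 psi_skew) ?(skew_pi N_gt0 phi_skew) //.
by rewrite IH // pi_eq // orbit_eq.
Qed.

Theorem theorem4p4 (n : nat) (phi : nat -> nat) (c : nat) :
  2 <= n ->
  is_skew_morphism n phi ->
  sk_complexity n phi c -> odd c ->
  forall psi : nat -> nat,
    is_skew_morphism n psi ->
    (exists2 c' : nat, sk_complexity n psi c' & odd c') ->
    psi (1 %% n) = phi (1 %% n) ->
    sk_ord n psi = sk_ord n phi ->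
    (forall a, a < sk_ord n phi -> sk_derived n psi a = sk_derived n phi a) ->
    (forall x, x < n ->
       iter (sk_auto_order n phi c) psi x = iter (sk_auto_order n phi c) phi x) ->
    forall x, x < n -> psi x = phi x.
Proof.
move=> n_gt1 phi_skew phi_c c_odd psi psi_skew _ one_eq ord_eq der_eq period_eq.
have n_gt0 : 0 < n by apply: ltnW.
rewrite modn_small // in one_eq.
apply: skew_eq_of_pi => // [|a aN]; first exact: sk_pi_eq_of_derived.
apply: (iter_eq_of_modn_eq1 (skew_lt phi_skew) period_eq n_gt1 one_eq).
exact: sk_pi_mod_auto_order.
Qed.
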